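(* Let $G$ be a necklace based on the cycle $C_n$, i.e. $G$ is obtained from $C_n$ by attaching, at each vertex $i$ of $C_n$ ($i=1,\dots,n$), a cycle $C^i$ that meets the rest of the graph only in the vertex $i$. Then $$\mathrm{vol}(G)=\mathrm{vol}(C_n)\prod_{i=1}^n\mathrm{vol}(C^i).$$
   Context: For a finite simple undirected graph $G=(V,E)$ with $V=[n]$, and $S\subseteq[n-1]$, the cut vector $x^S\in\mathbb{R}^{|E|}$ has coordinates $x^S_{ij}=1$ if $|\{i,j\}\cap S|=1$ and $x^S_{ij}=0$ otherwise, for each edge $(i,j)\in E$. The cut polytope is $\mathrm{Cut}(G)=\mathrm{conv}\{x^S: S\subseteq[n-1]\}\subset\mathbb{R}^{|E|}$, and $\mathrm{vol}(G)$ denotes the $|E|$-dimensional Lebesgue volume of $\mathrm{Cut}(G)$. *)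

From HB Require Import structures.
From mathcomp Require Import all_boot all_order all_algebra.
From mathcomp Require Import all_classical all_reals all_analysis.
Import Order.TTheory GRing.Theory Num.Theory.
Import numFieldNormedType.Exports.
Local Open Scope ring_scope.

(** * Graphs
   A finite simple undirected graph is given by a vertex finType [V] and an
   edge set [E : {set {set V}}] whose elements are 2-element subsets of [V]. *)

Definition edge {V : finType} (E : {set {set V}}) := {e : {set V} | e \in E}.

Definition cut_vector (R : realType) (V : finType) (E : {set {set V}})
  (S : {set V}) : edge E -> R :=
  fun e => if #|val e :&: S| == 1%N then 1 else 0.

Definition conv_hull {R : realType} {I : finType} {D : Type} (p : I -> D -> R)
  : set (D -> R) :=
  fun x => exists lam : I -> R,
     [/\ forall i, 0 <= lam i, \sum_i lam i = 1 &
         forall d, x d = \sum_i lam i * p i d].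

Definition cut_polytope (R : realType) (V : finType) (E : {set {set V}})
  : set (edge E -> R) :=
  conv_hull (fun S : {set V} => cut_vector R V E S).

(** |D|-dimensional Lebesgue volume of a set A ⊆ R^D (D a finite index type),
   defined as the iterated Lebesgue integral of the indicator of A over the
   coordinates listed in [s] (Tonelli: equals the product Lebesgue measure
   for measurable A, e.g. polytopes). [x] holds the not-yet-integrated
   coordinates. *)
Fixpoint iter_vol (R : realType) (D : eqType) (A : set (D -> R)) (s : seq D)
  (x : D -> R) : \bar R :=
  match s with
  | [::] => (\1_A x)%:E
  | d :: s' =>
      (\int[@lebesgue_measure R]_t
         iter_vol R D A s' (fun d' => if d' == d then t else x d'))%E
  end.

Definition volume (R : realType) (D : finType) (A : set (D -> R)) : \bar R :=
  iter_vol R D A (enum D) (fun _ => 0).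

Definition cut_vol (R : realType) (V : finType) (E : {set {set V}}) : \bar R :=
  volume R (edge E) (cut_polytope R V E).

Definition cycle_edges (k : nat) : {set {set 'I_k}} :=
  [set e : {set 'I_k} | [exists i : 'I_k, exists j : 'I_k,
     (val j == (i.+1 %% k)%N) && (e == [set i; j])]].

(** Vertices are pairs (i, j) with i < n, j < m i; vertex (i, 0) is the
   vertex i of the base cycle C_n, and C^i is the cycle on the vertices
   (i, 0), (i, 1), ..., (i, m i - 1). *)
Definition necklace_vertex {n : nat} (m : 'I_n -> nat) :=
  {i : 'I_n & 'I_(m i)}.

Definition necklace_adj {n : nat} (m : 'I_n -> nat)
  (u v : necklace_vertex m) : bool :=
  [&& val (tagged u) == 0%N, val (tagged v) == 0%N &
      val (tag v) == ((val (tag u)).+1 %% n)%N]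
  || ((tag u == tag v) && (val (tagged v) == ((val (tagged u)).+1 %% m (tag u))%N)).

Definition necklace_edges {n : nat} (m : 'I_n -> nat)
  : {set {set necklace_vertex m}} :=
  [set e | [exists u : necklace_vertex m, exists v : necklace_vertex m, necklace_adj m u v && (e == [set u; v])]].

From HB Require Import structures.
From mathcomp Require Import all_boot all_order all_algebra.
From mathcomp Require Import all_classical all_reals all_analysis.
From mathcomp Require Import fingroup perm zify.
Import Order.TTheory GRing.Theory Num.Theory.
Local Open Scope ring_scope.

(* A point lies in Cut(G) iff its restriction to the base cycle C_n and to
   each attached cycle C^i lies in the cut polytope of that cycle: restricting
   a cut of G gives cuts of the blocks, and conversely convex combinations of
   cuts of two blocks sharing a single vertex can be glued, after complementing
   one of the cuts so that both agree on the shared vertex.  Since every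
   coordinate of a cut polytope lies in [0, 1], the iterated integral defining
   the volume then splits into a product of one iterated integral per block.
   Each factor integrates over the edges of a cycle in some order; the order is
   irrelevant because the cut vectors of a cycle are exactly the indicator
   vectors of its even edge sets, so its cut polytope is invariant under all
   permutations of the edges. *)

Lemma big_option (T : Type) (idx : T) (op : Monoid.com_law idx) (I : finType)
    (F : option I -> T) :
  \big[op/idx]_k F k = op (F None) (\big[op/idx]_i F (Some i)).
Proof.
rewrite (bigD1 None) //= (reindex_omap Some id) => [|[] //].
by congr (op _ _); apply: eq_bigl => i; rewrite eqxx.
Qed.

Lemma perm_eq_enum (T : finType) (l : seq T) :
  perm_eq l (enum T) -> exists s : {perm T}, l = map s (enum T).
Proof.
case: l => [|x0 l'] ll.
  by exists 1%g; move/perm_size/esym/size0nil: ll ->.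
set l := x0 :: l' in ll *.
pose f e := nth x0 l (index e (enum T)).
have fE : map f (enum T) = l.
  apply: (@eq_from_nth _ x0); first by rewrite size_map (perm_size ll).
  move=> i; rewrite size_map => ilt.
  by rewrite (nth_map x0) // /f index_uniq ?enum_uniq.
have /injectiveP finj : injectiveb f.
  by rewrite /injectiveb /dinjectiveb fE (perm_uniq ll) enum_uniq.
by exists (perm finj); rewrite -[LHS]fE; apply: eq_map => e; rewrite permE.
Qed.

Lemma filter_codom {T D : finType} {f : T -> D} : injective f ->
  exists2 l, [seq d <- enum D | d \in codom f] = map f l & perm_eq l (enum T).
Proof.
move=> finj.
have [l fE] : exists l, [seq d <- enum D | d \in codom f] = map f l.
  elim: (enum D) => [|d s [l IH]]; first by exists [::].
  rewrite /=; case: codomP => [[x ->]|_]; last by exists l.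
  by exists (x :: l); rewrite IH.
exists l => //; apply: uniq_perm; rewrite ?enum_uniq //.
  by rewrite -(map_inj_uniq finj) -fE filter_uniq ?enum_uniq.
by move=> x; rewrite mem_enum -(mem_map finj) -fE mem_filter codom_f mem_enum.
Qed.

Lemma setI_set1l (T : finType) (x : T) (A : {set T}) :
  ([set x] :&: A = if x \in A then [set x] else finset.set0)%SET.
Proof. by apply/setP => y; case: ifP => xA; rewrite !inE; case: eqP => // ->. Qed.

Lemma even_sum_neq_perm (I : finType) (f : I -> I) (a : pred I) :
  injective f -> ~~ odd (\sum_i (a i != a (f i)))%N.
Proof.
move=> finj.
have E : (\sum_i (a i != a (f i)) + (\sum_i (a i && a (f i))).*2 = (\sum_i a i).*2)%N.
  have -> : (\sum_i a i).*2 = (\sum_i (a i + a (f i)))%N.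
    by rewrite big_split /= -addnn; congr (_ + _)%N; exact: reindex_inj.
  by rewrite -mul2n big_distrr -big_split; apply: eq_bigr => i _; case: (a i); case: (a (f i)).
by move/(congr1 odd): E; rewrite oddD !odd_double addbF => ->.
Qed.

Lemma sum_prefix_ord (k : nat) (a : 'I_k -> nat) (i : 'I_k) :
  (\sum_(l : 'I_k | l < i.+1) a l = \sum_(l : 'I_k | l < i) a l + a i)%N.
Proof.
rewrite (bigD1 i) ?ltnSn //= addnC; congr (_ + _)%N.
by apply: eq_bigl => l; rewrite ltnS -val_eqE /= andbC -ltn_neqAle.
Qed.

Lemma ordS_neq {k : nat} (i : 'I_k) : (1 < k)%N -> ordS i != i.
Proof.
move=> k1; rewrite -val_eqE /=; have := ltn_ord i; move: (val i) => j.
rewrite leq_eqVlt => /orP[/eqP jk|jk]; first by rewrite jk modnn; lia.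
by rewrite modn_small //; lia.
Qed.

Lemma cycle_cut_of_even (k : nat) (a : pred 'I_k) : ~~ odd (\sum_i a i)%N ->
  exists S : {set 'I_k}, forall i, ((i \in S) != (ordS i \in S)) = a i.
Proof.
(* Take the vertices preceded by an odd number of marked edges; the parity of
   the total closes the cycle. *)
move=> a_even; exists [set j : 'I_k | odd (\sum_(l : 'I_k | (l < j)%N) a l)] => i.
rewrite !inE.
have [ik|] := ltnP i.+1 k.
  by rewrite /= modn_small // sum_prefix_ord oddD; case: (odd _); case: (a i).
move=> ki; have ik : i.+1 = k by apply/eqP; rewrite eqn_leq ltn_ord ki.
have prefix0 : (\sum_(l : 'I_k | (l < 0)%N) a l = 0)%N.
  by apply: big_pred0 => l; rewrite ltn0.
rewrite /= ik modnn prefix0 /=.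
have total : (\sum_i a i = \sum_(l : 'I_k | (l < i.+1)%N) a l)%N.
  by apply: eq_bigl => l; rewrite ik ltn_ord.
move: a_even; rewrite total sum_prefix_ord oddD.
by case: (odd _); case: (a i).
Qed.

Lemma imset_set2 (aT rT : finType) (f : aT -> rT) a b : f @: [set a; b] = [set f a; f b].
Proof. by rewrite imsetU1 imset_set1. Qed.

(** * Iterated integrals *)

(* The iterated integrals below are not known to be measurable, so these facts
   are derived from the definition of the integral as a supremum over simple
   functions rather than from the measurable versions in the library. *)
Section IntegralT.
Variable R : realType.
Local Notation leb := (@lebesgue_measure R).
Local Open Scope ereal_scope.
Local Open Scope classical_set_scope.
Import HBNNSimple.

Lemma ge0_integralTZr (F : R -> \bar R) (c : R) :
  (forall t, 0 <= F t) -> (0 <= c)%R ->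
  \int[leb]_t (F t * c%:E) = (\int[leb]_t F t) * c%:E.
Proof.
move=> F0; rewrite le_eqVlt => /orP[/eqP <-|c0].
  by rewrite mule0; apply: integral0_eq => t _; rewrite mule0.
have F0' t : 0 <= F t * c%:E by rewrite mule_ge0 // lee_fin ltW.
rewrite !ge0_integralTE // muleC -ereal_sup_pZl //.
congr ereal_sup; rewrite eqEsubset; split => [_ [h hle <-]|_ [_ [h hle <-] <-]].
- have ci : (0 <= c^-1)%R by rewrite invr_ge0 ltW.
  exists (sintegral leb (scale_nnsfun h ci)).
    exists (scale_nnsfun h ci) => // x /=.
    rewrite EFinM -(@lee_pmul2l _ c%:E) ?lte_fin // muleA -EFinM divff ?gt_eqF //.
    by rewrite mul1r muleC hle.
  by rewrite sintegralrM muleA -EFinM divff ?gt_eqF // mul1e.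
- exists (scale_nnsfun h (ltW c0)); last exact: sintegralrM.
  by move=> x /=; rewrite mulrC EFinM lee_pmul2r ?lte_fin // hle.
Qed.

Lemma ge0_le_integralT (F G : R -> \bar R) : (forall t, 0 <= F t) ->
  (forall t, F t <= G t) -> \int[leb]_t F t <= \int[leb]_t G t.
Proof.
move=> F0 FG; have G0 t : 0 <= G t by exact: le_trans (F0 t) (FG t).
rewrite !ge0_integralTE //; apply: ereal_sup_le => _ [h hle <-].
by exists h => // x; exact: le_trans (hle x) (FG x).
Qed.

Lemma integral_indic_itv01 : \int[leb]_t (\1_`[0%R, 1%R] t)%:E = 1.
Proof.
rewrite integral_indic //= setIT lebesgue_measure_itv /= lte_fin ltr01.
by rewrite oppr0 adde0.
Qed.

End IntegralT.

Lemma indic_bigcap (R : comPzRingType) (T : Type) (I : finType) (A : I -> set T) x :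
  \1_(\bigcap_k A k)%classic x = \prod_k \1_(A k) x :> R.
Proof.
have [Ax|/existsNP[k nAkx]] := pselect (forall k, A k x).
  by rewrite indicE mem_set ?big1 // => k _; rewrite indicE mem_set.
rewrite indicE memNset; last by move/(_ k Logic.I).
by rewrite (bigD1 k) //= indicE memNset // mul0r.
Qed.

Section IterVol.
Variable R : realType.
Local Open Scope ereal_scope.
Local Open Scope classical_set_scope.

Lemma iter_vol_ge0 (D : eqType) (A : set (D -> R)) s x : 0 <= iter_vol R D A s x.
Proof.
elim: s x => [|d s IH] x /=; first by rewrite lee_fin indicE; case: (_ \in _).
exact: integral_ge0.
Qed.

Section LocalSet.
Variables (D : eqType) (P : pred D) (A : set (D -> R)).
Hypothesis A_local : forall x y, {in P, x =1 y} -> A x -> A y.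
Hypothesis A_box : forall x d, A x -> P d -> (0 <= x d <= 1)%R.

Lemma iter_vol_local s x y : {in [predD P & s], x =1 y} ->
  iter_vol R D A s x = iter_vol R D A s y.
Proof.
elim: s x y => [|d s IH] x y xy /=.
  rewrite !indicE; suff -> : (x \in A) = (y \in A) by [].
  by apply/idP/idP; rewrite !in_setE; apply: A_local => d Pd;
    [|apply/esym]; apply: xy; rewrite !inE Pd.
congr (integral _ _ _); apply/funext => t; apply: IH => d'.
rewrite !inE => /andP[nd' Pd']; case: eqP => // /eqP d'd.
by apply: xy; rewrite !inE negb_or d'd nd' Pd'.
Qed.

Lemma iter_vol_out01 s x d : d \notin s -> P d -> ~~ (0 <= x d <= 1)%R ->
  iter_vol R D A s x = 0.
Proof.
elim: s x => [|d' s IH] x /=.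
  by move=> _ Pd out; rewrite indicE memNset // => /A_box/(_ Pd); apply/negP.
rewrite in_cons negb_or => /andP[dd' ds] Pd out.
by apply: integral0_eq => t _; apply: IH; rewrite // (negbTE dd').
Qed.

Lemma iter_vol_le1 s x : uniq s -> all P s -> iter_vol R D A s x <= 1.
Proof.
elim: s x => [|d s IH] x /=; first by rewrite lee_fin indicE; case: (_ \in _).
case/andP=> ds us /andP[Pd Ps].
rewrite -(integral_indic_itv01 R); apply: ge0_le_integralT => t.
  exact: iter_vol_ge0.
rewrite indicE; have [t01|t01] := boolP (t \in _); first exact: IH.
rewrite (@iter_vol_out01 _ _ d) // eqxx.
by apply: contra t01 => t01; rewrite in_setE /= in_itv.
Qed.

End LocalSet.

Section Bigcap.
Variables (D : eqType) (I : finType) (blk : D -> I) (A : I -> set (D -> R)).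
Hypothesis A_local : forall k x y, {in [pred d | blk d == k], x =1 y} -> A k x -> A k y.
Hypothesis A_box : forall k x d, A k x -> blk d = k -> (0 <= x d <= 1)%R.

Lemma iter_vol_bigcap s x : uniq s ->
  iter_vol R D (\bigcap_k A k) s x =
    \prod_k iter_vol R D (A k) [seq d <- s | blk d == k] x.
Proof.
elim: s x => [|d s IH] x /=; first by rewrite indic_bigcap prodEFin.
case/andP=> ds us.
rewrite (bigD1 (blk d)) //= eqxx.
under eq_bigr => k /negbTE kd do rewrite eq_sym kd.
set C := (\prod_(k | _) _).
have C0 : 0 <= C by apply: prode_ge0 => k _; exact: iter_vol_ge0.
have Cfin : C \is a fin_num.
  apply: prode_fin_num => k _; rewrite ge0_fin_numE ?iter_vol_ge0 //.
  apply: le_lt_trans (ltry 1); apply: iter_vol_le1 (filter_uniq _ us) (filter_all _ _).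
  by move=> y d' Ay /eqP; apply: A_box.
rewrite -(fineK Cfin) -ge0_integralTZr ?fine_ge0 //; last first.
  by move=> t; exact: iter_vol_ge0.
congr (integral _ _ _); apply/funext => t.
rewrite IH // (bigD1 (blk d)) //= fineK //; congr (_ * _).
apply: eq_bigr => k kd.
apply: (@iter_vol_local _ [pred d | blk d == k]) => [|d']; first exact: A_local.
rewrite !inE => /andP[_ /eqP dk]; case: eqP => // d'd.
by rewrite -dk d'd eqxx in kd.
Qed.

End Bigcap.

Lemma iter_vol_map (D1 D2 : eqType) (f : D1 -> D2) (A : set (D1 -> R)) l x :
  injective f ->
  iter_vol R D2 [set y : D2 -> R | A (y \o f)] (map f l) x = iter_vol R D1 A l (x \o f).
Proof.
move=> finj; elim: l x => [|d l IH] x //=.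
congr (integral _ _ _); apply/funext => t; rewrite IH; congr iter_vol.
by apply/funext => d' /=; rewrite (inj_eq finj).
Qed.

Lemma iter_vol_perm (T : finType) (A : set (T -> R)) l :
  (forall (s : {perm T}) x, A x -> A (x \o s)) -> perm_eq l (enum T) ->
  iter_vol R T A l (fun _ => 0%R) = volume R T A.
Proof.
move=> Aperm /perm_eq_enum[s ->].
rewrite {1}(_ : A = [set y : T -> R | A (y \o s)]); first exact: iter_vol_map perm_inj.
apply/funext => y; apply/propext; split; first exact: Aperm.
by move/(Aperm s^-1%g); congr A; apply/funext => e /=; rewrite permKV.
Qed.

Lemma iter_vol_codom (T D : finType) (f : T -> D) (A : set (T -> R)) :
  injective f -> (forall (s : {perm T}) x, A x -> A (x \o s)) ->
  iter_vol R D [set y : D -> R | A (y \o f)] [seq d <- enum D | d \in codom f]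
    (fun _ => 0%R) = volume R T A.
Proof.
move=> finj Aperm; have [l -> ll] := filter_codom finj.
by rewrite iter_vol_map // iter_vol_perm.
Qed.

End IterVol.

(** * Cut polytopes *)

Definition crosses {V : finType} (S e : {set V}) : bool := #|e :&: S| == 1%N.

Lemma crosses2 (V : finType) (S : {set V}) (u v : V) : u != v ->
  crosses S [set u; v] = ((u \in S) != (v \in S)).
Proof.
move=> uv; rewrite /crosses finset.setIUl !setI_set1l.
by case: (u \in S); case: (v \in S);
  rewrite ?finset.setU0 ?finset.set0U ?cards2 ?uv ?cards1 ?cards0.
Qed.

Lemma crosses_imset (V W : finType) (f : V -> W) (S : {set W}) (e : {set V}) :
  injective f -> crosses S (f @: e) = crosses (f @^-1: S) e.
Proof.
move=> finj; rewrite /crosses (_ : f @: e :&: S = f @: (e :&: f @^-1: S)) ?card_imset //.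
apply/setP => w; rewrite !inE; apply/andP/imsetP => [[/imsetP[v ve ->] fvS]|[v]].
  by exists v; rewrite // !inE ve.
by rewrite !inE => /andP[ve fvS] ->; rewrite imset_f.
Qed.

Lemma eq_crosses (V : finType) (S1 S2 e : {set V}) :
  {in e, S1 =i S2} -> crosses S1 e = crosses S2 e.
Proof.
move=> S12; rewrite /crosses; congr (_ == _); apply: eq_card => v; rewrite !inE.
by case ve: (v \in e) => //=; rewrite S12.
Qed.

Section ConvHull.
Variable R : realType.

Lemma conv_hull_reindex (I J : finType) (D : Type) (p : I -> D -> R) (phi : J -> I)
    (c : J -> R) (x : D -> R) :
  (forall j, 0 <= c j) -> \sum_j c j = 1 ->
  (forall d, x d = \sum_j c j * p (phi j) d) -> conv_hull p x.
Proof.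
move=> c0 c1 xE; exists (fun i => \sum_(j | phi j == i) c j); split.
- by move=> i; apply: sumr_ge0.
- by rewrite -c1 (partition_big phi predT).
- move=> d; rewrite xE (partition_big phi predT) //=.
  by apply: eq_bigr => i _; rewrite mulr_suml; apply: eq_bigr => j /eqP <-.
Qed.

Lemma conv_hull_point (I : finType) (D : Type) (p : I -> D -> R) i : conv_hull p (p i).
Proof.
exists (fun j => (j == i)%:R); split => [j||d]; first by rewrite ler0n.
  by rewrite (bigD1 i) //= eqxx big1 ?addr0 // => j /negbTE ->.
by rewrite (bigD1 i) //= eqxx mul1r big1 ?addr0 // => j /negbTE ->; rewrite mul0r.
Qed.

End ConvHull.

Definition cut_gluing {V W : finType} {E : {set {set V}}} {F : {set {set W}}}
    (f : edge F -> edge E) (glue : {set V} -> {set W} -> {set V}) : Prop :=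
  (forall S T e, crosses (glue S T) (val (f e)) = crosses T (val e)) /\
  (forall S T e, e \notin codom f -> crosses (glue S T) (val e) = crosses S (val e)).

Section CutPolytope.
Variable R : realType.

Lemma cut_vectorE (V : finType) (E : {set {set V}}) S e :
  cut_vector R V E S e = (crosses S (val e))%:R.
Proof. by rewrite /cut_vector /crosses; case: ifP. Qed.

Lemma cut_polytope01 (V : finType) (E : {set {set V}}) x :
  cut_polytope R V E x -> forall e, 0 <= x e <= 1.
Proof.
case=> lam [lam0 lam1 xE] e; rewrite xE; apply/andP; split.
  by apply: sumr_ge0 => S _; rewrite cut_vectorE mulr_ge0 ?lam0.
rewrite -lam1; apply: ler_sum => S _; rewrite cut_vectorE.
by rewrite ler_piMr // lern1 leq_b1.
Qed.

Lemma cut_polytope_comp (V W : finType) (E : {set {set V}}) (F : {set {set W}})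
    (f : edge F -> edge E) (phi : {set V} -> {set W}) x :
  (forall S e, crosses (phi S) (val e) = crosses S (val (f e))) ->
  cut_polytope R V E x -> cut_polytope R W F (x \o f).
Proof.
move=> phiE [lam [lam0 lam1 xE]].
apply: (@conv_hull_reindex _ _ _ _ _ phi _ _ lam0 lam1) => e /=; rewrite xE.
by apply: eq_bigr => S _; rewrite !cut_vectorE phiE.
Qed.

Lemma cut_polytope_glue (V W : finType) (E : {set {set V}}) (F : {set {set W}})
    (f : edge F -> edge E) (glue : {set V} -> {set W} -> {set V}) x y w :
  cut_gluing f glue -> cut_polytope R V E x -> cut_polytope R W F y ->
  (forall e, w (f e) = y e) -> (forall e, e \notin codom f -> w e = x e) ->
  cut_polytope R V E w.
Proof.
move=> [glue_in glue_out] [lam [lam0 lam1 xE]] [mu [mu0 mu1 yE]] wf wx.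
apply: (@conv_hull_reindex _ _ _ _ _ (fun p => glue p.1 p.2) (fun p => lam p.1 * mu p.2)).
- by move=> p; apply: mulr_ge0.
- rewrite -(pair_bigA _ (fun S T => lam S * mu T)) /= -lam1.
  by apply: eq_bigr => S _; rewrite -mulr_sumr mu1 mulr1.
move=> e.
rewrite -(pair_bigA _ (fun S T => lam S * mu T * cut_vector R V E (glue S T) e)) /=.
under eq_bigr => S _ do under eq_bigr => T _ do rewrite -mulrA.
under eq_bigr => S _ do rewrite -mulr_sumr.
have [/codomP[e' ->]|ef] := boolP (e \in codom f).
  under eq_bigr => S _ do under eq_bigr => T _ do rewrite cut_vectorE glue_in -cut_vectorE.
  by rewrite -big_distrl /= lam1 mul1r wf yE.
rewrite wx // xE; apply: eq_bigr => S _.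
under eq_bigr => T _ do rewrite cut_vectorE glue_out // -cut_vectorE.
by rewrite -big_distrl /= mu1 mul1r.
Qed.

End CutPolytope.
Arguments cut_polytope_glue {R V W E F f glue x y w}.

(** * Cycles *)

Section Cycle.
Variable k : nat.

Lemma cycle_edge_proof (i : 'I_k) : [set i; ordS i] \in cycle_edges k.
Proof.
by rewrite inE; apply/existsP; exists i; apply/existsP; exists (ordS i); rewrite !eqxx.
Qed.

Definition cycle_edge (i : 'I_k) : edge (cycle_edges k) :=
  exist (fun e => e \in cycle_edges k) _ (cycle_edge_proof i).

Lemma cycle_edgeP (e : edge (cycle_edges k)) : exists i, e = cycle_edge i.
Proof.
case: e => e ek; have := ek.
rewrite inE => /existsP[i /existsP[j /andP[/eqP ji /eqP eE]]].
by exists i; apply: val_inj; rewrite /= eE (_ : j = ordS i) //; apply: val_inj.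
Qed.

Hypothesis k_gt2 : (2 < k)%N.

Lemma crosses_cycle_edge S i :
  crosses S (val (cycle_edge i)) = ((i \in S) != (ordS i \in S)).
Proof. by rewrite crosses2 // eq_sym ordS_neq //; lia. Qed.

Lemma ordS2_neq (i : 'I_k) : ordS (ordS i) != i.
Proof.
rewrite -val_eqE /=; have := ltn_ord i; move: (val i) => j jk.
case: (ltngtP j.+2 k) => [jk2|kj2|kE].
- by rewrite !modn_small //; lia.
- by rewrite (_ : j.+1 = k) ?modnn ?modn_small //; lia.
- by rewrite -kE (modn_small (ltnSn j.+1)) modnn; lia.
Qed.

Lemma cycle_edge_inj : injective cycle_edge.
Proof.
move=> i j /(congr1 val) /= ij.
have /set2P[//|iS] : i \in [set j; ordS j] by rewrite -ij set21.
have /set2P[->//|jS] : j \in [set i; ordS i] by rewrite ij set21.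
by move: (ordS2_neq j); rewrite -iS -jS eqxx.
Qed.

Lemma sum_cycle_edges (F : edge (cycle_edges k) -> nat) :
  (\sum_e F e = \sum_i F (cycle_edge i))%N.
Proof.
rewrite -(big_imset _ (in2W cycle_edge_inj)) /=; apply: eq_bigl => e.
by have [i ->] := cycle_edgeP e; rewrite imset_f.
Qed.

Lemma cycle_cut_polytope_perm (R : realType) (s : {perm edge (cycle_edges k)}) x :
  cut_polytope R _ (cycle_edges k) x -> cut_polytope R _ (cycle_edges k) (x \o s).
Proof.
have cut_of S : exists S', forall e, crosses S' (val e) = crosses S (val (s e)).
  pose a i := crosses S (val (s (cycle_edge i))).
  have [|S' S'E] := @cycle_cut_of_even k a.
    rewrite /a -(sum_cycle_edges (fun e => crosses S (val (s e)))).
    have -> : (\sum_(e : edge (cycle_edges k)) crosses S (val (s e)) =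
               \sum_(e : edge (cycle_edges k)) crosses S (val e))%N.
      by rewrite [RHS](reindex_inj (@perm_inj _ s)).
    rewrite sum_cycle_edges.
    under eq_bigr => i _ do rewrite crosses_cycle_edge.
    exact: even_sum_neq_perm (@ordS_inj k).
  by exists S' => e; have [i ->] := cycle_edgeP e; rewrite crosses_cycle_edge S'E.
have [phi phiE] := choice cut_of.
exact: cut_polytope_comp phiE.
Qed.

End Cycle.
Arguments cycle_edge {k}.
Arguments cycle_edgeP {k}.

(** * Necklaces *)

(* The blocks of the necklace are indexed by [option 'I_n]: [None] is the base
   cycle C_n, whose vertex i is the vertex (i, 0) of the necklace, and [Some i]
   is the attached cycle C^i. *)
Section Necklace.
Variables (n : nat) (m : 'I_n -> nat).
Hypothesis n_gt2 : (2 < n)%N.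
Hypothesis m_gt2 : forall i, (2 < m i)%N.
Local Notation V := (necklace_vertex m).
Local Notation E := (necklace_edges m).

Definition block_len (k : option 'I_n) : nat := if k is Some i then m i else n.

Lemma block_len_gt2 k : (2 < block_len k)%N.
Proof. by case: k. Qed.

Definition bead_root (i : 'I_n) : 'I_(m i) := Ordinal (ltnW (ltnW (m_gt2 i))).

Definition block_vertex (k : option 'I_n) : 'I_(block_len k) -> V :=
  if k is Some i then Tagged (fun j => 'I_(m j)) else fun i => Tagged _ (bead_root i).

Lemma block_vertex_inj k : injective (block_vertex k).
Proof. by case: k => [i|] a b /=; [exact: eq_from_Tagged|move/(congr1 tag)]. Qed.

Lemma block_edge_proof k (e : edge (cycle_edges (block_len k))) :
  block_vertex k @: val e \in E.
Proof.
have [a {e}->] := cycle_edgeP e; rewrite /= imset_set2 inE.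
apply/existsP; exists (block_vertex k a); apply/existsP; exists (block_vertex k (ordS a)).
by case: k a => [i|] a; rewrite /necklace_adj /= !eqxx ?orbT.
Qed.

Definition block_edge k (e : edge (cycle_edges (block_len k))) : edge E :=
  exist (fun S => S \in E) _ (@block_edge_proof k e).

Lemma block_edge_cycle_edge k a :
  val (block_edge k (cycle_edge a)) = [set block_vertex k a; block_vertex k (ordS a)].
Proof. exact: imset_set2. Qed.

Lemma block_edge_inj k : injective (block_edge k).
Proof.
by move=> e1 e2 /(congr1 val) /(imset_inj (@block_vertex_inj k)) /val_inj.
Qed.

Lemma block_edgeP (e : edge E) : exists k e', e = block_edge k e'.
Proof.
case: e => S SE; have := SE; rewrite inE => /existsP[[i a] /existsP[[j b]]].
rewrite /necklace_adj /= => /andP[/orP[base|bead] /eqP SE'].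
  case/and3P: base => /eqP a0 /eqP b0 /eqP ji.
  have ij : [set i; j] \in cycle_edges n.
    rewrite inE; apply/existsP; exists i; apply/existsP; exists j.
    by rewrite eqxx andbT; apply/eqP.
  exists None, (exist (fun e => e \in cycle_edges n) _ ij); apply: val_inj.
  by rewrite /= SE' imset_set2; congr [set _; _]; congr Tagged; apply: val_inj.
case/andP: bead => /eqP ij; case: j / ij b SE' => b SE' ba.
have ab : [set a; b] \in cycle_edges (m i).
  rewrite inE; apply/existsP; exists a; apply/existsP; exists b.
  by rewrite eqxx andbT ba.
exists (Some i), (exist (fun e => e \in cycle_edges (m i)) _ ab).
by apply: val_inj; rewrite /= SE' imset_set2.
Qed.

Lemma tag_bead_edge {i e v} : v \in val (block_edge (Some i) e) -> tag v = i.
Proof. by case/imsetP => a _ ->. Qed.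

Lemma base_edge_root {e v} : v \in val (block_edge None e) -> v = block_vertex None (tag v).
Proof. by case/imsetP => a _ ->. Qed.

Lemma base_edge_neq_bead_edge e i e' : block_edge None e != block_edge (Some i) e'.
Proof.
apply/eqP => ee'; have [a ea] := cycle_edgeP e; subst e.
have tag_i v : v \in val (block_edge None (cycle_edge a)) -> tag v = i.
  by rewrite ee'; apply: tag_bead_edge.
have ta : a = i by apply: (tag_i (block_vertex None a)); rewrite block_edge_cycle_edge set21.
have tSa : ordS a = i.
  by apply: (tag_i (block_vertex None (ordS a))); rewrite block_edge_cycle_edge set22.
by move: (ordS_neq a (ltnW n_gt2)); rewrite tSa ta eqxx.
Qed.

Lemma block_edge_disj k1 k2 e1 e2 : block_edge k1 e1 = block_edge k2 e2 -> k1 = k2.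
Proof.
case: k1 k2 e1 e2 => [i|] [j|] e1 e2 // e12.
- have [a ea] := cycle_edgeP e1; subst e1.
  have vin : block_vertex (Some i) a \in val (block_edge (Some j) e2).
    by rewrite -e12 block_edge_cycle_edge set21.
  by rewrite -(tag_bead_edge vin).
- by move: (base_edge_neq_bead_edge e2 i e1); rewrite e12 eqxx.
- by move: (base_edge_neq_bead_edge e1 j e2); rewrite e12 eqxx.
Qed.

Definition block_of (e : edge E) : option 'I_n :=
  odflt None [pick k | e \in codom (block_edge k)].

Lemma block_of_edge k e : block_of (block_edge k e) = k.
Proof.
rewrite /block_of; case: pickP => [k' /codomP[e' /esym/block_edge_disj] //|].
by move/(_ k); rewrite codom_f.
Qed.

Lemma mem_codom_block_edge k e : (e \in codom (block_edge k)) = (block_of e == k).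
Proof.
have [k' [e' ->]] := block_edgeP e; rewrite block_of_edge.
apply/codomP/eqP => [[e'' /block_edge_disj] //|<-]; by exists e'.
Qed.

Lemma bead_edge_vertex {i e v} : e \notin codom (block_edge (Some i)) -> v \in val e ->
  tag v != i \/ v = block_vertex None i.
Proof.
have [[j|] [e' ->]] := block_edgeP e; rewrite mem_codom_block_edge block_of_edge => ji ve.
  by left; rewrite (tag_bead_edge ve).
have [tv|] := eqVneq (tag v) i; last by left.
by right; rewrite (base_edge_root ve) tv.
Qed.

Lemma crosses_block_edge k S a :
  crosses S (val (block_edge k (cycle_edge a))) =
    ((block_vertex k a \in S) != (block_vertex k (ordS a) \in S)).
Proof.
rewrite block_edge_cycle_edge crosses2 // (inj_eq (@block_vertex_inj k)) eq_sym.
exact/ordS_neq/ltnW/block_len_gt2.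
Qed.

Lemma base_gluing : exists glue, cut_gluing (block_edge None) glue.
Proof.
(* Complement S on each attached cycle whose root must change side. *)
exists (fun (S : {set V}) (T : {set 'I_n}) =>
  [set v : V | (v \in S) (+) ((block_vertex None (tag v) \in S) (+) (tag v \in T))]).
split => [S T e|S T e].
  have [a ->] := cycle_edgeP e.
  by rewrite crosses_block_edge crosses_cycle_edge // !finset.inE /= !addKb.
have [[i|] [e' ->]] := block_edgeP e; last by rewrite codom_f.
move=> _; have [b ->] := cycle_edgeP e'; rewrite !crosses_block_edge !finset.inE /=.
by case: (Tagged _ b \in S) (Tagged _ (ordS b) \in S) (Tagged _ (bead_root i) \in S) (i \in T)
  => [] [] [] [].
Qed.

Lemma bead_gluing i : exists glue, cut_gluing (block_edge (Some i)) glue.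
Proof.
(* Replace S on C^i by T, complemented if needed so that the root keeps its side. *)
pose align (S : {set V}) (T : {set 'I_(m i)}) :=
  if (bead_root i \in T) == (block_vertex None i \in S) then T else ~: T.
pose glue (S : {set V}) T := [set v in S | tag v != i] :|: block_vertex (Some i) @: align S T.
exists glue.
have mem_bead S T a : (block_vertex (Some i) a \in glue S T) = (a \in align S T).
  by rewrite !finset.inE /= eqxx andbF (mem_imset _ _ (@block_vertex_inj (Some i))).
rewrite /cut_gluing; split => [S T e|S T e out].
  have [a ->] := cycle_edgeP e.
  rewrite crosses_block_edge crosses_cycle_edge ?block_len_gt2 //= !mem_bead.
  by rewrite /align; case: ifP => _ //; rewrite !finset.inE; case: (a \in T); case: (_ \in T).
apply: eq_crosses => v ve; case: (bead_edge_vertex out ve) => [tv|->].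
  rewrite /glue !finset.inE tv andbT; case: imsetP => [[a _ va]|_]; last by rewrite orbF.
  by rewrite va eqxx in tv.
rewrite [block_vertex None i](_ : _ = block_vertex (Some i) (bead_root i)) // mem_bead /align.
by case: ifP => [/eqP //|]; rewrite finset.inE; case: (_ \in T); case: (_ \in S).
Qed.

Lemma block_gluing k : exists glue, cut_gluing (block_edge k) glue.
Proof. by case: k => [i|]; [exact: bead_gluing|exact: base_gluing]. Qed.

Variable R : realType.

Lemma cut_polytope_block k w : cut_polytope R V E w ->
  cut_polytope R _ (cycle_edges (block_len k)) (w \o block_edge k).
Proof.
apply: (@cut_polytope_comp R _ _ _ _ (block_edge k) (fun S => block_vertex k @^-1: S)).
move=> S e.
by rewrite /= crosses_imset //; exact: block_vertex_inj.
Qed.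

Lemma cut_polytope_necklace w : cut_polytope R V E w <->
  forall k, cut_polytope R _ (cycle_edges (block_len k)) (w \o block_edge k).
Proof.
split=> [Gw k|blocks_w]; first exact: cut_polytope_block.
pose w_on (ks : seq (option 'I_n)) e := if block_of e \in ks then w e else 0.
suff /(_ (enum {: option 'I_n})) : forall ks, cut_polytope R V E (w_on ks).
  by congr cut_polytope; apply/funext => e; rewrite /w_on mem_enum.
elim=> [|k ks IH].
  rewrite (_ : w_on _ = cut_vector R V E finset.set0); first exact: conv_hull_point.
  by apply/funext => e; rewrite cut_vectorE /crosses finset.setI0 cards0.
have [glue gluing] := block_gluing k.
apply: (cut_polytope_glue gluing IH (blocks_w k)) => [e|e].
  by rewrite /w_on block_of_edge mem_head.
by rewrite mem_codom_block_edge /w_on in_cons => /negbTE ->.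
Qed.

Lemma cut_vol_necklace :
  cut_vol R _ E = (\prod_k cut_vol R _ (cycle_edges (block_len k)))%E.
Proof.
pose A k : set (edge E -> R) := fun w => cut_polytope R _ _ (w \o block_edge k).
rewrite /cut_vol /volume.
have -> : cut_polytope R _ E = (\bigcap_k A k)%classic.
  apply/funext => w; apply/propext.
  split => [/cut_polytope_necklace Gw k _|Aw]; first exact: Gw.
  by apply/cut_polytope_necklace => k; apply: Aw.
rewrite (@iter_vol_bigcap R _ _ block_of A) ?enum_uniq //.
- apply: eq_bigr => k _.
  under eq_filter => e do rewrite -mem_codom_block_edge.
  rewrite iter_vol_codom //; first exact: block_edge_inj.
  by move=> s x; apply: cycle_cut_polytope_perm; exact: block_len_gt2.
- move=> k x y xy; rewrite /A /= (_ : x \o block_edge k = y \o block_edge k) //.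
  by apply/funext => e; apply: xy; rewrite inE block_of_edge.
- move=> k x e Ax /eqP; rewrite -mem_codom_block_edge => /codomP[e' ->].
  exact: cut_polytope01 Ax e'.
Qed.

End Necklace.

Theorem proposition7 (R : realType) (n : nat) (m : 'I_n -> nat) :
  (3 <= n)%N -> (forall i, 3 <= m i)%N ->
  cut_vol R _ (necklace_edges m) =
    (cut_vol R _ (cycle_edges n) * \prod_(i < n) cut_vol R _ (cycle_edges (m i)))%E.
Proof. by move=> n_gt2 m_gt2; rewrite cut_vol_necklace // big_option. Qed.
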